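(* Let $T$ be a tree with the fantail topology. Then $T$ is pseudo-radial, of chain-net order $\le 2$. Moreover, if $T$ has height $>\omega$ and, for every $n\in\omega$, every element of $T(n)$ has infinitely many immediate successors, then the chain-net order of $T$ is exactly $2$.
   Context: A tree is a partially ordered set in which the set of predecessors of each element is well-ordered. Levels: $T(0)$ is the set of minimal elements; given $T(\beta)$ for $\beta<\alpha$, $T\restriction\alpha=\bigcup_{\beta<\alpha}T(\beta)$ and $T(\alpha)$ is the set of minimal elements of $T\setminus T\restriction\alpha$. The height of $T$ is the least $\alpha$ with $T(\alpha)=\emptyset$. For $t\in T$, $V_t=\{s\in T:s\ge t\}$; $(s,t]=\{x: s<x\le t\}$. The interval topology on $T$ has as base all sets $(s,t]$ together with all singletons $\{t\}$ with $t$ minimal. The fine wedge topology has as subbase all sets $V_t$ and their complements $T\setminus V_t$. The fantail topology is the meet (greatest lower bound in the lattice of topologies, i.e. intersection) of the interval topology and the fine wedge topology. For $A\subseteq X$ in a space $X$, let $A^{\sim1}$ be the set of all limits of convergent well-ordered nets from $A$; $A^{\sim(\alpha+1)}=(A^{\sim\alpha})^{\sim1}$, and $A^{\sim\alpha}=\bigcup_{\beta<\alpha}A^{\sim\beta}$ for limit $\alpha$. $X$ is pseudo-radial if for every $A$ the closure of $A$ equals $A^{\sim\alpha}$ for some $\alpha$ (closures are obtained by iterating this operation); the chain-net order of $X$ is the least ordinal $\alpha$ such that $A^{\sim(\alpha+1)}=A^{\sim\alpha}=\overline{A}$ for all $A\subseteq X$. *)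

From Stdlib Require Import List Arith.
Set Implicit Arguments.

Section Tree.
Variable T : Type.
Variable le : T -> T -> Prop.

Definition lt (x y : T) : Prop := le x y /\ x <> y.

Definition has_least (r : T -> T -> Prop) (P : T -> Prop) : Prop :=
  exists m, P m /\ forall y, P y -> r m y.

Definition is_tree : Prop :=
  (forall x, le x x) /\
  (forall x y, le x y -> le y x -> x = y) /\
  (forall x y z, le x y -> le y z -> le x z) /\
  (forall t s1 s2, lt s1 t -> lt s2 t -> le s1 s2 \/ le s2 s1) /\
  (forall t (P : T -> Prop), (forall s, P s -> lt s t) -> (exists s, P s) ->
     has_least le P).

Definition minimal_in (P : T -> Prop) (t : T) : Prop :=
  P t /\ forall s, P s -> ~ lt s t.

(* below n = T|n = union of the levels T(m), m < n;
   level n = T(n) = minimal elements of T \ T|n. *)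
Fixpoint below (n : nat) : T -> Prop :=
  match n with
  | 0 => fun _ => False
  | S k => fun t => below k t \/ minimal_in (fun s => ~ below k s) t
  end.

Definition level (n : nat) : T -> Prop := minimal_in (fun s => ~ below n s).

Definition level_omega : T -> Prop :=
  minimal_in (fun s => forall n, ~ below n s).

(* height > omega  iff  T(beta) is nonempty for every beta <= omega *)
Definition height_gt_omega : Prop :=
  (forall n, exists t, level n t) /\ (exists t, level_omega t).

Definition immediate_successor (t s : T) : Prop :=
  lt t s /\ forall x, lt t x -> ~ lt x s.

Definition infinite_pred (P : T -> Prop) : Prop :=
  ~ exists l : list T, forall x, P x -> In x l.

Definition V (t : T) : T -> Prop := fun s => le t s.
Definition interval (s t : T) : T -> Prop := fun x => lt s x /\ le x t.

Definition interval_base (B : T -> Prop) : Prop :=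
  (exists s t, lt s t /\ forall x, B x <-> interval s t x) \/
  (exists t, minimal_in (fun _ => True) t /\ forall x, B x <-> x = t).

Definition interval_open (U : T -> Prop) : Prop :=
  forall x, U x -> exists B, interval_base B /\ B x /\ forall y, B y -> U y.

Definition fw_subbasic (p : bool * T) : T -> Prop :=
  fun x => if fst p then V (snd p) x else ~ V (snd p) x.

Definition fine_wedge_open (U : T -> Prop) : Prop :=
  forall x, U x -> exists l : list (bool * T),
    (forall p, In p l -> fw_subbasic p x) /\
    (forall y, (forall p, In p l -> fw_subbasic p y) -> U y).

Definition fantail_open (U : T -> Prop) : Prop :=
  interval_open U /\ fine_wedge_open U.
End Tree.

Section Space.
Variable X : Type.
Variable opn : (X -> Prop) -> Prop.

Definition closure (A : X -> Prop) : X -> Prop :=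
  fun x => forall U, opn U -> U x -> exists y, U y /\ A y.

Definition well_order (I : Type) (R : I -> I -> Prop) : Prop :=
  (exists i : I, True) /\
  (forall i, R i i) /\
  (forall i j, R i j -> R j i -> i = j) /\
  (forall i j k, R i j -> R j k -> R i k) /\
  (forall i j, R i j \/ R j i) /\
  (forall P : I -> Prop, (exists i, P i) ->
     exists m, P m /\ forall j, P j -> R m j).

Definition net_converges (I : Type) (R : I -> I -> Prop) (f : I -> X) (x : X)
  : Prop :=
  forall U, opn U -> U x -> exists i0, forall i, R i0 i -> U (f i).

Definition chain_limits (A : X -> Prop) : X -> Prop :=
  fun x => exists (I : Type) (R : I -> I -> Prop) (f : I -> X),
    well_order R /\ (forall i, A (f i)) /\ net_converges R f x.

Definition chain_iter (k : nat) (A : X -> Prop) : X -> Prop :=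
  Nat.iter k chain_limits A.

Definition set_equiv (A B : X -> Prop) : Prop := forall x, A x <-> B x.

Definition pseudo_radial : Prop :=
  forall A, exists k : nat, set_equiv (closure A) (chain_iter k A).

Definition chain_net_order_le (k : nat) : Prop :=
  forall A, set_equiv (chain_iter (S k) A) (chain_iter k A) /\
            set_equiv (chain_iter k A) (closure A).

Definition chain_net_order_eq (k : nat) : Prop :=
  chain_net_order_le k /\ forall m, m < k -> ~ chain_net_order_le m.
End Space.

From Stdlib Require Import List Arith Lia Wf_nat Classical ClassicalEpsilon ProofIrrelevance.

(* A point x of the closure of A either lies in A, or has infinitely many immediate
   successors whose cones meet A, or is a limit node below which points of the first two
   kinds are cofinal: otherwise an interval (s, x] together with the cones of the finitely
   many offending successors along it yields a fantail neighbourhood of x missing A.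
   Fine-wedge neighbourhoods of y contain the cones of all but finitely many immediate
   successors of y, so points of the second kind are limits of omega-sequences from A,
   and limit nodes are limits of the chain of their predecessors; hence cl A = A^{~2}.
   For the lower bound let x lie on level omega and let A consist of the immediate
   successors, off the branch of x, of nodes below x.  Every neighbourhood of x meets A,
   since a node p < x has infinitely many immediate successors.  But along a well-ordered
   net from A converging to x the branch points must climb cofinally below x; choosing an
   omega-subsequence with strictly increasing branch points gives a subset of A that some
   neighbourhood of x avoids, although the net meets it beyond every index. *)

Set Implicit Arguments.
Unset Strict Implicit.

Lemma well_order_nat : well_order Nat.le.
Proof.
  split; [exists 0; exact I |].
  split; [exact Nat.le_refl |].
  split; [exact Nat.le_antisymm |].
  split; [exact Nat.le_trans |].
  split; [intros i j; lia |].
  intros P hP.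
  destruct (dec_inh_nat_subset_has_unique_least_element P (fun n => classic (P n)) hP)
    as [m [hm _]].
  exists m; exact hm.
Qed.

Section ChainLimits.
Variables (X : Type) (opn : (X -> Prop) -> Prop).

Lemma chain_limits_of_mem (A : X -> Prop) x : A x -> chain_limits opn A x.
Proof.
  intros hx. exists unit, (fun _ _ => True), (fun _ => x).
  split; [| split; [intros _; exact hx | intros U _ hU; exists tt; intros _ _; exact hU]].
  split; [exists tt; exact I |].
  split; [intros _; exact I |].
  split; [intros [] [] _ _; reflexivity |].
  split; [intros; exact I |].
  split; [intros; left; exact I |].
  intros P [i hi]. exists i. split; [exact hi | intros; exact I].
Qed.

Lemma chain_limits_mono (A B : X -> Prop) x :
  (forall y, A y -> B y) -> chain_limits opn A x -> chain_limits opn B x.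
Proof.
  intros hAB [I [R [f [hR [hf hconv]]]]]. exists I, R, f.
  split; [exact hR | split; [intro i; exact (hAB _ (hf i)) | exact hconv]].
Qed.

Lemma chain_limits_sub_closure (A : X -> Prop) x :
  chain_limits opn A x -> closure opn A x.
Proof.
  intros [I [R [f [hR [hf hconv]]]]] U hU hx.
  destruct (hconv U hU hx) as [i0 hi0].
  destruct hR as (_ & R_refl & _).
  exists (f i0). split; [exact (hi0 i0 (R_refl i0)) | exact (hf i0)].
Qed.

Lemma closure_mono (A B : X -> Prop) x :
  (forall y, A y -> B y) -> closure opn A x -> closure opn B x.
Proof.
  intros hAB hx U hU hUx. destruct (hx U hU hUx) as [y [hUy hAy]].
  exists y. split; [exact hUy | exact (hAB y hAy)].
Qed.

Lemma closure_closure (A : X -> Prop) x : closure opn (closure opn A) x -> closure opn A x.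
Proof.
  intros hx U hU hUx. destruct (hx U hU hUx) as [y [hUy hy]]. exact (hy U hU hUy).
Qed.

Lemma chain_iter_sub_closure k (A : X -> Prop) x : chain_iter opn k A x -> closure opn A x.
Proof.
  revert x; induction k as [| k IH]; intros x hx.
  - intros U _ hUx. exists x. split; assumption.
  - apply closure_closure, (closure_mono IH), chain_limits_sub_closure, hx.
Qed.

Lemma chain_iter_le m k (A : X -> Prop) x :
  m <= k -> chain_iter opn m A x -> chain_iter opn k A x.
Proof.
  induction 1 as [| k _ IH]; intros hx; [exact hx | exact (chain_limits_of_mem (IH hx))].
Qed.

Lemma chain_net_order_le_of_closure k :
  (forall A x, closure opn A x -> chain_iter opn k A x) -> chain_net_order_le opn k.
Proof.
  intros hcl A. split; intros x; split; intros hx.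
  - exact (hcl A x (chain_iter_sub_closure hx)).
  - exact (chain_limits_of_mem hx).
  - exact (chain_iter_sub_closure hx).
  - exact (hcl A x hx).
Qed.

Lemma pseudo_radial_of_closure k :
  (forall A x, closure opn A x -> chain_iter opn k A x) -> pseudo_radial opn.
Proof.
  intros hcl A. exists k. intros x. split; [apply hcl | apply chain_iter_sub_closure].
Qed.

Lemma not_chain_net_order_le (A : X -> Prop) x k :
  closure opn A x -> ~ chain_iter opn k A x -> forall m, m <= k -> ~ chain_net_order_le opn m.
Proof.
  intros hcl hnot m hm hle.
  exact (hnot (chain_iter_le hm (proj2 (proj2 (hle A) x) hcl))).
Qed.

End ChainLimits.

Lemma net_converges_mono X (opn opn' : (X -> Prop) -> Prop) I (R : I -> I -> Prop) f x :
  (forall U, opn' U -> opn U) -> net_converges opn R f x -> net_converges opn' R f x.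
Proof. intros h hconv U hU hUx. exact (hconv U (h U hU) hUx). Qed.

Section FinitePredicates.
Variable T : Type.

Definition finite_pred (P : T -> Prop) : Prop := exists l : list T, forall x, P x -> In x l.

Lemma finite_pred_sub (P Q : T -> Prop) :
  (forall x, P x -> Q x) -> finite_pred Q -> finite_pred P.
Proof. intros hPQ [l hl]. exists l. intros x hx. exact (hl x (hPQ x hx)). Qed.

Lemma finite_pred_or (P Q : T -> Prop) :
  finite_pred P -> finite_pred Q -> finite_pred (fun x => P x \/ Q x).
Proof.
  intros [l1 h1] [l2 h2]. exists (l1 ++ l2).
  intros x [hx | hx]; apply in_or_app; [left; exact (h1 x hx) | right; exact (h2 x hx)].
Qed.

Lemma finite_pred_at_most_one (P : T -> Prop) :
  (forall x y, P x -> P y -> x = y) -> finite_pred P.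
Proof.
  intros huniq. destruct (classic (exists x, P x)) as [[x hx] | hn].
  - exists (x :: nil). intros y hy. left. exact (huniq x y hx hy).
  - exists nil. intros y hy. apply hn. exists y. exact hy.
Qed.

Lemma finite_pred_exact (P : T -> Prop) : finite_pred P -> exists l, forall x, In x l <-> P x.
Proof.
  intros [l hl]. revert P hl. induction l as [| a l IH]; intros P hl.
  - exists nil. intros x. split; [intros [] | intros hx; exact (hl x hx)].
  - destruct (IH (fun x => P x /\ x <> a)) as [l' hl'].
    { intros x [hx ne]. destruct (hl x hx) as [e | h]; [congruence | exact h]. }
    destruct (classic (P a)) as [ha | ha].
    + exists (a :: l'). intros x. simpl. rewrite hl'. split.
      * intros [<- | [hx _]]; assumption.
      * intros hx. destruct (classic (a = x)) as [e | ne]; [left; exact e | right].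
        split; [exact hx | intros e; apply ne; symmetry; exact e].
    + exists l'. intros x. rewrite hl'. split; [intros [hx _]; exact hx |].
      intros hx. split; [exact hx | intros ->; exact (ha hx)].
Qed.

Lemma infinite_pred_fresh (P : T -> Prop) :
  infinite_pred P -> forall l, exists x, P x /\ ~ In x l.
Proof.
  intros hinf l. apply NNPP; intros hn. apply hinf. exists l.
  intros x hx. apply NNPP; intros hnin. apply hn. exists x. split; assumption.
Qed.

Lemma infinite_pred_injective_seq (P : T -> Prop) : infinite_pred P ->
  exists c : nat -> T, (forall n, P (c n)) /\ forall n m, c n = c m -> n = m.
Proof.
  intros hinf.
  destruct (choice (fun l x => P x /\ ~ In x l) (infinite_pred_fresh hinf)) as [fresh hfresh].
  set (L := nat_rect (fun _ => list T) nil (fun _ l => fresh l :: l)).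
  assert (hL : forall n m, n < m -> In (fresh (L n)) (L m)).
  { intros n m; induction m as [| m IH]; intros h; [lia |].
    simpl. destruct (Nat.eq_dec n m) as [-> | ne]; [left; reflexivity | right; apply IH; lia]. }
  exists (fun n => fresh (L n)). split; [intros n; exact (proj1 (hfresh (L n))) |].
  intros n m e. destruct (lt_eq_lt_dec n m) as [[h | h] | h]; [| exact h |]; exfalso.
  - apply (proj2 (hfresh (L m))). rewrite <- e. exact (hL n m h).
  - apply (proj2 (hfresh (L n))). rewrite e. exact (hL m n h).
Qed.

Lemma injective_seq_eventually_avoids (c : nat -> T) :
  (forall n m, c n = c m -> n = m) -> forall l, exists N, forall n, N <= n -> ~ In (c n) l.
Proof.
  intros c_inj l. induction l as [| a l [N hN]].
  - exists 0. intros n _ [].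
  - destruct (classic (exists n0, c n0 = a)) as [[n0 e] | hn].
    + exists (max N (S n0)). intros n hn [h | h].
      * subst a. apply c_inj in h. lia.
      * exact (hN n ltac:(lia) h).
    + exists N. intros n hn' [h | h]; [apply hn; exists n; symmetry; exact h | exact (hN n hn' h)].
Qed.

End FinitePredicates.

Section Tree.
Variables (T : Type) (le : T -> T -> Prop).
Hypothesis tree : is_tree le.

Lemma tree_refl x : le x x.
Proof. destruct tree as (h & _). exact (h x). Qed.

Lemma tree_antisym x y : le x y -> le y x -> x = y.
Proof. destruct tree as (_ & h & _). exact (h x y). Qed.

Lemma tree_trans x y z : le x y -> le y z -> le x z.
Proof. destruct tree as (_ & _ & h & _). exact (h x y z). Qed.

Lemma tree_wf t (P : T -> Prop) :
  (forall s, P s -> lt le s t) -> (exists s, P s) -> has_least le P.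
Proof. destruct tree as (_ & _ & _ & _ & h). exact (h t P). Qed.

Lemma tree_comparable a b t : le a t -> le b t -> le a b \/ le b a.
Proof.
  intros hat hbt.
  destruct (classic (a = t)) as [-> | na]; [right; exact hbt |].
  destruct (classic (b = t)) as [-> | nb]; [left; exact hat |].
  destruct tree as (_ & _ & _ & h & _). exact (h t a b (conj hat na) (conj hbt nb)).
Qed.

Lemma tree_lt_not_le a b : lt le a b -> ~ le b a.
Proof. intros [hab ne] hba. exact (ne (tree_antisym hab hba)). Qed.

Lemma tree_lt_le_trans a b c : lt le a b -> le b c -> lt le a c.
Proof.
  intros [hab ne] hbc. split; [exact (tree_trans hab hbc) |].
  intros <-. exact (ne (tree_antisym hab hbc)).
Qed.

Lemma tree_le_lt_trans a b c : le a b -> lt le b c -> lt le a c.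
Proof.
  intros hab [hbc ne]. split; [exact (tree_trans hab hbc) |].
  intros <-. exact (ne (tree_antisym hbc hab)).
Qed.

Lemma increasing_seq_injective (g : nat -> T) :
  (forall n, lt le (g n) (g (S n))) -> forall n m, g n = g m -> n = m.
Proof.
  intros hg.
  assert (hmono : forall n m, n < m -> lt le (g n) (g m)).
  { intros n m; induction m as [| m IH]; intros h; [lia |].
    destruct (Nat.eq_dec n m) as [-> | ne]; [exact (hg m) |].
    exact (tree_lt_le_trans (IH ltac:(lia)) (proj1 (hg m))). }
  intros n m e. destruct (lt_eq_lt_dec n m) as [[h | h] | h]; [| exact h |]; exfalso.
  - exact (proj2 (hmono n m h) e).
  - exact (proj2 (hmono m n h) (eq_sym e)).
Qed.

Lemma imm_succ_between z w : lt le z w -> exists c, immediate_successor le z c /\ le c w.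
Proof.
  intros hzw.
  destruct (classic (exists s, lt le z s /\ lt le s w)) as [hs | hn].
  - destruct (tree_wf (t := w) (P := fun s => lt le z s /\ lt le s w) (fun s hs => proj2 hs) hs)
      as [m [[hzm hmw] hmin]].
    exists m. split; [split; [exact hzm |] | exact (proj1 hmw)].
    intros y hzy hym.
    exact (tree_lt_not_le hym (hmin y (conj hzy (tree_lt_le_trans hym (proj1 hmw))))).
  - exists w. split; [split; [exact hzw |] | exact (tree_refl w)].
    intros y hzy hyw. apply hn. exists y. split; assumption.
Qed.

Lemma le_imm_succ y c t : immediate_successor le y c -> le t c -> le t y \/ t = c.
Proof.
  intros [hyc himm] htc.
  destruct (tree_comparable htc (proj1 hyc)) as [hty | hyt]; [left; exact hty |].
  destruct (classic (t = c)) as [e | ne]; [right; exact e |].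
  destruct (classic (y = t)) as [<- | ne']; [left; exact (tree_refl y) |].
  exfalso. exact (himm t (conj hyt ne') (conj htc ne)).
Qed.

Lemma imm_succ_unique y c1 c2 t : immediate_successor le y c1 -> immediate_successor le y c2 ->
  le c1 t -> le c2 t -> c1 = c2.
Proof.
  intros h1 h2 hc1 hc2. destruct (tree_comparable hc1 hc2) as [h | h].
  - destruct (le_imm_succ h2 h) as [hy | e]; [exfalso; exact (tree_lt_not_le (proj1 h1) hy) | exact e].
  - destruct (le_imm_succ h1 h) as [hy | e];
      [exfalso; exact (tree_lt_not_le (proj1 h2) hy) | symmetry; exact e].
Qed.

Lemma imm_pred_unique p1 p2 b :
  immediate_successor le p1 b -> immediate_successor le p2 b -> p1 = p2.
Proof.
  intros h1 h2.
  destruct (le_imm_succ h1 (proj1 (proj1 h2))) as [h21 | e]; [| contradiction (proj2 (proj1 h2))].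
  destruct (le_imm_succ h2 (proj1 (proj1 h1))) as [h12 | e]; [| contradiction (proj2 (proj1 h1))].
  exact (tree_antisym h12 h21).
Qed.

Lemma imm_succ_below_finite p (l : list T) :
  finite_pred (fun c => immediate_successor le p c /\ exists t, In t l /\ le c t).
Proof.
  induction l as [| t l IH].
  - exists nil. intros c [_ [t [[] _]]].
  - apply (finite_pred_sub (Q := fun c => (immediate_successor le p c /\ le c t) \/
                                          (immediate_successor le p c /\ exists t', In t' l /\ le c t'))).
    + intros c [hc [t' [[<- | ht'] hct']]]; [left | right]; split; try assumption.
      exists t'. split; assumption.
    + apply finite_pred_or; [| exact IH].
      apply finite_pred_at_most_one. intros c1 c2 [h1 ht1] [h2 ht2].
      exact (imm_succ_unique h1 h2 ht1 ht2).
Qed.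

Lemma fine_wedge_nbhd_cones U p : fine_wedge_open le U -> U p ->
  exists l : list T, forall c w, immediate_successor le p c ->
    (forall t, In t l -> ~ le c t) -> le c w -> U w.
Proof.
  intros hU hp. destruct (hU p hp) as [sub [hsub_p hsub_U]].
  exists (map snd sub). intros c w hc hcl hcw. apply hsub_U.
  intros [b t] hin. specialize (hsub_p _ hin).
  assert (hct : ~ le c t) by (apply hcl, in_map_iff; exists (b, t); split; [reflexivity | exact hin]).
  destruct b; unfold fw_subbasic, V in *; simpl in *.
  - exact (tree_trans hsub_p (tree_trans (proj1 (proj1 hc)) hcw)).
  - intros htw. destruct (tree_comparable htw hcw) as [htc | hct']; [| exact (hct hct')].
    destruct (le_imm_succ hc htc) as [htp | ->]; [exact (hsub_p htp) | exact (hct (tree_refl c))].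
Qed.


Definition cone_meets (A : T -> Prop) c : Prop := exists a, A a /\ le c a.

Definition succ_toward (A : T -> Prop) y c : Prop :=
  immediate_successor le y c /\ cone_meets A c.

Definition fans_into (A : T -> Prop) y : Prop := infinite_pred (succ_toward A y).

Definition fan_closure (A : T -> Prop) y : Prop := A y \/ fans_into A y.

Definition cofinal_below (E : T -> Prop) x : Prop :=
  (exists s, lt le s x) /\ forall s, lt le s x -> exists e, E e /\ lt le s e /\ lt le e x.

Section Separation.
Variables (A : T -> Prop) (x : T) (B : T -> Prop).
Hypotheses (B_base : interval_base le B) (B_x : B x)
  (B_avoids : forall y, B y -> le y x -> ~ A y)
  (B_finite : forall y, B y -> le y x -> finite_pred (succ_toward A y)).

Let on_branch y := B y /\ le y x.

Lemma on_branch_up y z : on_branch y -> le y z -> le z x -> on_branch z.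
Proof.
  intros [hy _] hyz hzx. split; [| exact hzx].
  destruct B_base as [[s [t [_ hB]]] | [t [_ hB]]].
  - destruct (proj1 (hB y) hy) as [hsy _]. destruct (proj1 (hB x) B_x) as [_ hxt].
    apply hB. split; [exact (tree_lt_le_trans hsy hyz) | exact (tree_trans hzx hxt)].
  - apply hB. rewrite (proj1 (hB y) hy) in hyz. rewrite (proj1 (hB x) B_x) in hzx.
    exact (tree_antisym hzx hyz).
Qed.

Lemma on_branch_interval_open z : on_branch z ->
  exists B', interval_base le B' /\ B' z /\ forall w, B' w -> on_branch w.
Proof.
  intros [hz hzx]. destruct B_base as [[s [t [_ hB]]] | [t [ht hB]]].
  - destruct (proj1 (hB z) hz) as [hsz _]. destruct (proj1 (hB x) B_x) as [_ hxt].
    exists (interval le s z).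
    split; [left; exists s, z; split; [exact hsz | tauto] |].
    split; [split; [exact hsz | exact (tree_refl z)] |].
    intros w [hsw hwz]. assert (hwx : le w x) by exact (tree_trans hwz hzx).
    split; [apply hB; split; [exact hsw | exact (tree_trans hwx hxt)] | exact hwx].
  - exists B. split; [right; exists t; split; assumption | split; [exact hz |]].
    intros w hw. split; [exact hw |].
    rewrite (proj1 (hB w) hw), <- (proj1 (hB x) B_x). exact (tree_refl x).
Qed.

Lemma on_branch_lt y z : on_branch y -> ~ le z x -> le y z -> lt le y z.
Proof. intros [_ hyx] hzx hyz. split; [exact hyz | intros <-; exact (hzx hyx)]. Qed.

Let nbhd z := exists y, on_branch y /\ le y z /\
  forall w, lt le y w -> le w z -> ~ le w x -> ~ cone_meets A w.

Lemma on_branch_nbhd z : on_branch z -> nbhd z.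
Proof.
  intros hz. exists z. split; [exact hz | split; [exact (tree_refl z) |]].
  intros w hzw hwz. exfalso. exact (tree_lt_not_le hzw hwz).
Qed.

Lemma nbhd_interval_open : interval_open le nbhd.
Proof.
  intros z [y [hy [hyz hw]]].
  destruct (classic (le z x)) as [hzx | hzx].
  - destruct (on_branch_interval_open (on_branch_up hy hyz hzx)) as [B' [hB' [hzB' hB'_on]]].
    exists B'. split; [exact hB' | split; [exact hzB' |]].
    intros w hw'. exact (on_branch_nbhd (hB'_on w hw')).
  - assert (hyz' := on_branch_lt hy hzx hyz).
    exists (interval le y z). split; [left; exists y, z; split; [exact hyz' | tauto] |].
    split; [split; [exact hyz' | exact (tree_refl z)] |].
    intros w [hyw hwz]. exists y. split; [exact hy | split; [exact (proj1 hyw) |]].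
    intros w' hyw' hw'w. exact (hw w' hyw' (tree_trans hw'w hwz)).
Qed.

Lemma nbhd_fine_wedge_open : fine_wedge_open le nbhd.
Proof.
  intros z [y [hy [hyz hw]]].
  destruct (classic (le z x)) as [hzx | hzx].
  - assert (hz := on_branch_up hy hyz hzx).
    destruct (finite_pred_exact (B_finite (proj1 hz) hzx)) as [l hl].
    exists ((true, z) :: map (fun c => (false, c)) l). split.
    + intros p [<- | hp]; [exact (tree_refl z) |].
      apply in_map_iff in hp as [c [<- hc]]. apply hl in hc as [[hzc _] _].
      exact (tree_lt_not_le hzc).
    + intros w hsub. exists z. split; [exact hz | split; [exact (hsub _ (or_introl eq_refl)) |]].
      intros w' hzw' hw'w _ [a [ha hw'a]].
      destruct (imm_succ_between hzw') as [c [hc hcw']].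
      assert (hcl : In c l).
      { apply hl. split; [exact hc | exists a; split; [exact ha | exact (tree_trans hcw' hw'a)]]. }
      refine (hsub (false, c) _ (tree_trans hcw' hw'w)).
      right. apply in_map_iff. exists c. split; [reflexivity | exact hcl].
  - exists ((true, z) :: nil). split; [intros p [<- | []]; exact (tree_refl z) |].
    intros w hsub. assert (hzw : le z w) by exact (hsub _ (or_introl eq_refl)).
    exists y. split; [exact hy | split; [exact (tree_trans hyz hzw) |]].
    intros w' hyw' hw'w hw'x [a [ha hw'a]].
    destruct (tree_comparable hw'w hzw) as [hw'z | hzw'].
    + exact (hw w' hyw' hw'z hw'x (ex_intro _ a (conj ha hw'a))).
    + refine (hw z (on_branch_lt hy hzx hyz) (tree_refl z) hzx _).
      exists a. split; [exact ha | exact (tree_trans hzw' hw'a)].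
Qed.

Lemma nbhd_avoids z : nbhd z -> ~ A z.
Proof.
  intros [y [hy [hyz hw]]] hz. destruct (classic (le z x)) as [hzx | hzx].
  - exact (B_avoids (proj1 (on_branch_up hy hyz hzx)) hzx hz).
  - exact (hw z (on_branch_lt hy hzx hyz) (tree_refl z) hzx (ex_intro _ z (conj hz (tree_refl z)))).
Qed.

Lemma fantail_nbhd_avoiding : exists U, fantail_open le U /\ U x /\ forall z, U z -> ~ A z.
Proof.
  exists nbhd. split; [split; [exact nbhd_interval_open | exact nbhd_fine_wedge_open] |].
  split; [exact (on_branch_nbhd (conj B_x (tree_refl x))) | exact nbhd_avoids].
Qed.

End Separation.

Lemma not_fan_closure A y : ~ fan_closure A y -> ~ A y /\ finite_pred (succ_toward A y).
Proof.
  intros hn. split; [intros h; apply hn; left; exact h |].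
  apply NNPP. intros h. apply hn. right. exact h.
Qed.

Lemma interval_nbhd_avoiding_on_branch (E : T -> Prop) x : ~ E x -> ~ cofinal_below E x ->
  exists B, interval_base le B /\ B x /\ forall y, B y -> le y x -> ~ E y.
Proof.
  intros hEx hcof. destruct (classic (exists s, lt le s x)) as [hs | hmin].
  - assert (exists s0, lt le s0 x /\ forall e, lt le s0 e -> lt le e x -> ~ E e)
      as [s0 [hs0 hgap]].
    { apply NNPP. intros hn. apply hcof. split; [exact hs |]. intros s hsx.
      apply NNPP. intros hn'. apply hn. exists s. split; [exact hsx |].
      intros e hse hex he. exact (hn' (ex_intro _ e (conj he (conj hse hex)))). }
    exists (interval le s0 x). split; [left; exists s0, x; split; [exact hs0 | tauto] |].
    split; [split; [exact hs0 | exact (tree_refl x)] |].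
    intros y [hs0y _] hyx. destruct (classic (y = x)) as [-> | ne]; [exact hEx |].
    exact (hgap y hs0y (conj hyx ne)).
  - exists (fun y => y = x).
    split; [right; exists x; split; [| tauto] |].
    { split; [exact I | intros s _ hsx; exact (hmin (ex_intro _ s hsx))]. }
    split; [reflexivity | intros y -> _; exact hEx].
Qed.

Lemma closure_fan_closure A x : closure (fantail_open le) A x ->
  fan_closure A x \/ cofinal_below (fan_closure A) x.
Proof.
  intros hcl. apply NNPP. intros hn.
  destruct (interval_nbhd_avoiding_on_branch (E := fan_closure A) (x := x)) as [B [hB [hBx hBE]]];
    [tauto | tauto |].
  destruct (fantail_nbhd_avoiding hB hBx
              (fun y hy hyx => proj1 (not_fan_closure (hBE y hy hyx)))
              (fun y hy hyx => proj2 (not_fan_closure (hBE y hy hyx))))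
    as [U [hU [hUx hUA]]].
  destruct (hcl U hU hUx) as [y [hUy hAy]]. exact (hUA y hUy hAy).
Qed.

Lemma fans_into_chain_limit A y : fans_into A y -> chain_limits (fantail_open le) A y.
Proof.
  intros hfan.
  destruct (infinite_pred_injective_seq hfan) as [c [hc c_inj]].
  destruct (choice (fun n a => A a /\ le (c n) a) (fun n => proj2 (hc n))) as [a ha].
  exists nat, Nat.le, a. split; [exact well_order_nat | split; [intros n; exact (proj1 (ha n)) |]].
  intros U [_ hU] hUy. destruct (fine_wedge_nbhd_cones hU hUy) as [l hl].
  destruct (imm_succ_below_finite y l) as [bad hbad].
  destruct (injective_seq_eventually_avoids c_inj bad) as [N hN].
  exists N. intros n hn. apply (hl (c n)); [exact (proj1 (hc n)) | | exact (proj2 (ha n))].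
  intros t ht hct. apply (hN n hn), hbad. split; [exact (proj1 (hc n)) | exists t; split; assumption].
Qed.

Lemma well_order_predecessors x : (exists s, lt le s x) ->
  well_order (fun i j : {s | lt le s x} => le (proj1_sig i) (proj1_sig j)).
Proof.
  intros [s0 hs0].
  split; [exists (exist _ s0 hs0); exact I |].
  split; [intros i; exact (tree_refl _) |].
  split; [intros [i hi] [j hj] hij hji; simpl in *|].
  { assert (e : i = j) by exact (tree_antisym hij hji). subst j. f_equal. apply proof_irrelevance. }
  split; [intros i j k hij hjk; exact (tree_trans hij hjk) |].
  split; [intros [i hi] [j hj]; exact (tree_comparable (proj1 hi) (proj1 hj)) |].
  intros P [[i hi] hPi].
  destruct (tree_wf (t := x) (P := fun s => exists h : lt le s x, P (exist _ s h)))
    as [m [[hm hPm] hmin]].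
  - intros s [h _]. exact h.
  - exists i, hi. exact hPi.
  - exists (exist _ m hm). split; [exact hPm |].
    intros [j hj] hPj. apply hmin. exists hj. exact hPj.
Qed.

Lemma interval_converges_pred_net x (f : {s | lt le s x} -> T) :
  (exists s, lt le s x) -> (forall i, lt le (proj1_sig i) (f i) /\ le (f i) x) ->
  net_converges (interval_open le) (fun i j => le (proj1_sig i) (proj1_sig j)) f x.
Proof.
  intros [s0 hs0] hf U hU hUx. destruct (hU x hUx) as [B [hB [hBx hBU]]].
  destruct hB as [[s [t [_ hB]]] | [t [[_ hmin] hB]]].
  - destruct (proj1 (hB x) hBx) as [hsx hxt].
    exists (exist _ s hsx). intros [i hi] hsi. simpl in hsi.
    apply hBU, hB. destruct (hf (exist _ i hi)) as [hif hfx]. simpl in hif.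
    split; [exact (tree_le_lt_trans hsi hif) | exact (tree_trans hfx hxt)].
  - exfalso. apply (hmin s0 I). rewrite <- (proj1 (hB x) hBx). exact hs0.
Qed.

Lemma cofinal_below_chain_limit E x : cofinal_below E x -> chain_limits (fantail_open le) E x.
Proof.
  intros [hpred hcof].
  destruct (choice (fun i e => E e /\ lt le (proj1_sig i) e /\ lt le e x)
                   (fun i : {s | lt le s x} => hcof _ (proj2_sig i))) as [f hf].
  exists {s | lt le s x}, (fun i j => le (proj1_sig i) (proj1_sig j)), f.
  split; [exact (well_order_predecessors hpred) | split; [intros i; exact (proj1 (hf i)) |]].
  apply (net_converges_mono (opn := interval_open le)); [intros U hU; exact (proj1 hU) |].
  apply (interval_converges_pred_net hpred). intros i.
  destruct (hf i) as [_ [hif hfx]]. split; [exact hif | exact (proj1 hfx)].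
Qed.

Lemma closure_sub_chain_iter2 A x :
  closure (fantail_open le) A x -> chain_iter (fantail_open le) 2 A x.
Proof.
  intros hcl.
  assert (hfan : forall y, fan_closure A y -> chain_limits (fantail_open le) A y).
  { intros y [hy | hy]; [exact (chain_limits_of_mem _ hy) | exact (fans_into_chain_limit hy)]. }
  destruct (closure_fan_closure hcl) as [hx | hx].
  - exact (chain_limits_of_mem _ (hfan x hx)).
  - exact (chain_limits_mono hfan (cofinal_below_chain_limit hx)).
Qed.


Lemma below_down n s t : below le n t -> le s t -> below le n s.
Proof.
  revert s t; induction n as [| n IH]; intros s t ht hst; [exact ht |].
  destruct ht as [ht | [hnt hmin]]; [left; exact (IH s t ht hst) |].
  destruct (classic (s = t)) as [-> | ne]; [right; split; assumption |].
  left. apply NNPP. intros hns. exact (hmin s hns (conj hst ne)).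
Qed.

Lemma below_level n s : below le n s -> exists m, level le m s.
Proof.
  revert s; induction n as [| n IH]; intros s hs; [destruct hs |].
  destruct hs as [hs | hs]; [exact (IH s hs) | exists n; exact hs].
Qed.

Lemma level_omega_below x s : level_omega le x -> lt le s x -> exists n, below le n s.
Proof.
  intros [_ hmin] hsx. apply NNPP. intros hn.
  refine (hmin s _ hsx). intros n hb. exact (hn (ex_intro _ n hb)).
Qed.

Definition cofinal_seq (q : nat -> T) x : Prop :=
  (forall n, lt le (q n) x) /\ forall s, lt le s x -> exists n, lt le s (q n).

Lemma level_omega_cofinal_seq x : level_omega le x -> exists q, cofinal_seq q x.
Proof.
  intros hx.
  assert (hleave : forall n, exists s, lt le s x /\ ~ below le n s).
  { intros n. apply NNPP. intros hn. apply (proj1 hx (S n)). right.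
    split; [exact (proj1 hx n) |].
    intros s hs hsx. exact (hn (ex_intro _ s (conj hsx hs))). }
  destruct (choice (fun n m => (lt le m x /\ ~ below le n m) /\
                               forall s, lt le s x /\ ~ below le n s -> le m s)) as [q hq].
  { intros n. exact (tree_wf (t := x) (P := fun s => lt le s x /\ ~ below le n s)
                             (fun s hs => proj1 hs) (hleave n)). }
  exists q. split; [intros n; exact (proj1 (proj1 (hq n))) |].
  intros s hsx. destruct (level_omega_below hx hsx) as [n hn]. exists n.
  destruct (hq n) as [[hqx hqn] _].
  destruct (tree_comparable (proj1 hsx) (proj1 hqx)) as [hsq | hqs].
  - split; [exact hsq | intros e; rewrite e in hn; exact (hqn hn)].
  - exfalso. exact (hqn (below_down hn hqs)).
Qed.

Lemma level_omega_pred_infinite x p :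
  (forall n t, level le n t -> infinite_pred (immediate_successor le t)) ->
  level_omega le x -> lt le p x -> infinite_pred (immediate_successor le p).
Proof.
  intros hinf hx hpx. destruct (level_omega_below hx hpx) as [n hn].
  destruct (below_level hn) as [m hm]. exact (hinf m p hm).
Qed.

Definition off_branch_succ x b : Prop :=
  ~ le b x /\ exists p, lt le p x /\ immediate_successor le p b.

Lemma off_branch_succ_in_closure x q : cofinal_seq q x ->
  (forall p, lt le p x -> infinite_pred (immediate_successor le p)) ->
  closure (fantail_open le) (off_branch_succ x) x.
Proof.
  intros [hq_lt hq_cof] hinf U [hU hW] hUx.
  destruct (hU x hUx) as [B [hB [hBx hBU]]].
  destruct hB as [[s [t [_ hB]]] | [t [[_ hmin] hB]]].
  - destruct (proj1 (hB x) hBx) as [hsx hxt].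
    destruct (hq_cof s hsx) as [n hsq].
    assert (hUq : U (q n)).
    { apply hBU, hB. split; [exact hsq | exact (tree_trans (proj1 (hq_lt n)) hxt)]. }
    destruct (fine_wedge_nbhd_cones hW hUq) as [l hl].
    destruct (imm_succ_below_finite (q n) (x :: l)) as [bad hbad].
    destruct (infinite_pred_fresh (hinf (q n) (hq_lt n)) bad) as [c [hc hc_bad]].
    assert (hc_free : forall t, In t (x :: l) -> ~ le c t).
    { intros t' ht' hct'. apply hc_bad, hbad. split; [exact hc | exists t'; split; assumption]. }
    exists c. split; [exact (hl c c hc (fun t' ht' => hc_free t' (or_intror ht')) (tree_refl c)) |].
    split; [exact (hc_free x (or_introl eq_refl)) | exists (q n); split; [exact (hq_lt n) | exact hc]].
  - exfalso. apply (hmin (q 0) I). rewrite <- (proj1 (hB x) hBx). exact (hq_lt 0).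
Qed.

Lemma off_branch_nbhd_avoiding x (S : T -> Prop) q0 :
  (forall b, S b -> off_branch_succ x b) -> lt le q0 x ->
  (forall y, lt le q0 y -> le y x -> finite_pred (fun b => S b /\ immediate_successor le y b)) ->
  exists U, fantail_open le U /\ U x /\ forall z, U z -> ~ S z.
Proof.
  intros hS hq0 hfin. apply (fantail_nbhd_avoiding (B := interval le q0 x)).
  - left. exists q0, x. split; [exact hq0 | tauto].
  - split; [exact hq0 | exact (tree_refl x)].
  - intros y _ hyx hSy. exact (proj1 (hS y hSy) hyx).
  - intros y [hq0y _] hyx.
    apply (finite_pred_sub (Q := fun c => (immediate_successor le y c /\ le c x) \/
                                          (S c /\ immediate_successor le y c))).
    + intros c [hc [b [hSb hcb]]]. destruct (hS b hSb) as [_ [p [hpx hpb]]].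
      destruct (le_imm_succ hpb hcb) as [hcp | <-].
      * left. split; [exact hc | exact (tree_trans hcp (proj1 hpx))].
      * right. split; assumption.
    + apply finite_pred_or; [| exact (hfin y hq0y hyx)].
      apply finite_pred_at_most_one. intros c1 c2 [h1 h1x] [h2 h2x].
      exact (imm_succ_unique h1 h2 h1x h2x).
Qed.

Section OffBranchNets.
Variables (x : T) (q : nat -> T) (I : Type) (R : I -> I -> Prop) (f parent : I -> T).
Hypotheses (q_cofinal : cofinal_seq q x) (R_wo : well_order R)
  (f_off : forall i, ~ le (f i) x)
  (parent_spec : forall i, lt le (parent i) x /\ immediate_successor le (parent i) (f i))
  (f_conv : net_converges (fantail_open le) R f x).

Lemma net_off_branch_succ i : off_branch_succ x (f i).
Proof. exact (conj (@f_off i) (ex_intro _ (parent i) (parent_spec i))). Qed.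

Lemma parent_eventually_above q0 : lt le q0 x -> exists i0, forall i, R i0 i -> lt le q0 (parent i).
Proof.
  intros hq0x.
  destruct (off_branch_nbhd_avoiding
              (S := fun b => off_branch_succ x b /\ exists p, immediate_successor le p b /\ le p q0)
              (fun b hb => proj1 hb) hq0x) as [U [hU [hUx hUS]]].
  { intros y hq0y _. exists nil. intros b [[_ [p [hpb hpq0]]] hyb].
    rewrite (imm_pred_unique hpb hyb) in hpq0. exact (tree_lt_not_le hq0y hpq0). }
  destruct (f_conv hU hUx) as [i0 hi0]. exists i0. intros i hi.
  destruct (parent_spec i) as [hpx hpf].
  assert (hq0p : ~ le (parent i) q0).
  { intros hpq0. apply (hUS (f i) (hi0 i hi)).
    split; [exact (net_off_branch_succ i) | exists (parent i); split; assumption]. }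
  destruct (tree_comparable (proj1 hq0x) (proj1 hpx)) as [h | h]; [| contradiction].
  split; [exact h | intros e; rewrite <- e in hq0p; exact (hq0p (tree_refl q0))].
Qed.

Lemma climbing_indices : exists j : nat -> I,
  (forall n, lt le (parent (j n)) (parent (j (S n)))) /\
  (forall n i, R (j (S n)) i -> lt le (q n) (parent i)).
Proof.
  destruct R_wo as [[i00 _] [R_refl [_ [R_trans [R_total _]]]]].
  destruct (choice (fun q0 i0 => lt le q0 x -> forall i, R i0 i -> lt le q0 (parent i)))
    as [th hth].
  { intros q0. destruct (classic (lt le q0 x)) as [h | h].
    - destruct (parent_eventually_above h) as [i0 hi0]. exists i0. intros _. exact hi0.
    - exists i00. intros h'. contradiction. }
  destruct (choice (fun (ab : I * I) c => R (fst ab) c /\ R (snd ab) c)) as [ub hub].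
  { intros [a b]. destruct (R_total a b) as [h | h]; [exists b | exists a]; simpl; auto. }
  exists (nat_rect (fun _ => I) (th (q 0)) (fun n jn => ub (th (parent jn), th (q n)))).
  split.
  - intros n. simpl. apply hth; [exact (proj1 (parent_spec _)) | exact (proj1 (hub (_, _)))].
  - intros n i hi. simpl in hi. apply (hth (q n)); [exact (proj1 q_cofinal n) |].
    exact (R_trans _ _ _ (proj2 (hub (_, _))) hi).
Qed.

Lemma off_branch_net_absurd : False.
Proof.
  destruct climbing_indices as [j [hj_up hj_above]].
  assert (hj_inj := increasing_seq_injective hj_up).
  destruct (off_branch_nbhd_avoiding (x := x) (S := fun b => exists n, b = f (j n)) (q0 := q 0))
    as [U [hU [hUx hUS]]].
  - intros b [n ->]. exact (net_off_branch_succ (j n)).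
  - exact (proj1 q_cofinal 0).
  - intros y _ _. apply finite_pred_at_most_one.
    intros b1 b2 [[n1 ->] h1] [[n2 ->] h2].
    rewrite (hj_inj n1 n2); [reflexivity |].
    rewrite (imm_pred_unique (proj2 (parent_spec (j n1))) h1).
    exact (eq_sym (imm_pred_unique (proj2 (parent_spec (j n2))) h2)).
  - destruct (f_conv hU hUx) as [i0 hi0].
    destruct (classic (exists n, R i0 (j n))) as [[n hn] | hn].
    + exact (hUS (f (j n)) (hi0 _ hn) (ex_intro _ n eq_refl)).
    + destruct (proj2 q_cofinal (parent i0) (proj1 (parent_spec i0))) as [n hn'].
      assert (hjn : R (j (S n)) i0).
      { destruct R_wo as (_ & _ & _ & _ & R_total & _).
        destruct (R_total i0 (j (S n))) as [h | h]; [exfalso; exact (hn (ex_intro _ (S n) h)) | exact h]. }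
      exact (tree_lt_not_le hn' (proj1 (hj_above n i0 hjn))).
Qed.

End OffBranchNets.

Lemma off_branch_succ_not_chain_limit x q : cofinal_seq q x ->
  ~ chain_limits (fantail_open le) (off_branch_succ x) x.
Proof.
  intros hq [I [R [f [hR [hf hconv]]]]].
  destruct (choice (fun i p => lt le p x /\ immediate_successor le p (f i)) (fun i => proj2 (hf i)))
    as [parent hparent].
  exact (off_branch_net_absurd hq hR (fun i => proj1 (hf i)) hparent hconv).
Qed.

End Tree.

Theorem theorem2p4 (T : Type) (le : T -> T -> Prop) :
  is_tree le ->
  pseudo_radial (fantail_open le) /\
  chain_net_order_le (fantail_open le) 2 /\
  (height_gt_omega le ->
   (forall (n : nat) (t : T), level le n t ->
      infinite_pred (immediate_successor le t)) ->
   chain_net_order_eq (fantail_open le) 2).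
Proof.
  intros tree.
  assert (hcl : forall A x, closure (fantail_open le) A x -> chain_iter (fantail_open le) 2 A x)
    by (intros A x; apply closure_sub_chain_iter2, tree).
  split; [exact (pseudo_radial_of_closure hcl) |].
  split; [exact (chain_net_order_le_of_closure hcl) |].
  intros [_ [x hx]] hinf.
  destruct (level_omega_cofinal_seq tree hx) as [q hq].
  split; [exact (chain_net_order_le_of_closure hcl) |].
  intros m hm. apply (not_chain_net_order_le (A := off_branch_succ le x) (x := x) (k := 1)).
  - exact (off_branch_succ_in_closure tree hq (fun p => level_omega_pred_infinite hinf hx)).
  - exact (off_branch_succ_not_chain_limit tree hq).
  - lia.
Qed.
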